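(* There exists a stability parameter $\theta\in\mathbb{R}^3$ with $\theta\cdot(2,6,2)=0$ such that every instanton representation of $\mathbf{Q}$ of charge $2$ is $\theta$-stable.
   Context: The quiver $\mathbf{Q}$ has vertices $-1,0,1$, arrows $\eta_0,\dots,\eta_3:-1\to0$, $\phi_0,\dots,\phi_3:0\to1$ and relations $\phi_i\eta_j+\phi_j\eta_i=0$; a representation consists of vector spaces $V_{-1},V_0,V_1$ and linear maps $f_i:V_{-1}\to V_0$, $g_i:V_0\to V_1$ with $g_if_j+g_jf_i=0$. $R$ is locally injective if $\sum\lambda_if_i$ is injective for all $[\lambda]\in\mathbb{P}^3$ outside a closed subset of codimension at least 2; globally surjective if $\sum\lambda_ig_i$ is surjective for all $\lambda\in\mathbb{C}^4\setminus\{0\}$. An instanton representation of charge $n$ is a locally injective, globally surjective representation with dimension vector $(n,2n+2,n)$. $R$ is $\theta$-stable if $\theta\cdot\dim R=0$ and $\theta\cdot\dim S<0$ for every nonzero proper subrepresentation $S$. *)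

From HB Require Import structures.
From mathcomp Require Import all_boot all_order all_algebra.
From mathcomp Require Import reals.
From mathcomp Require Import complex.
From mathcomp Require Import mpoly.
Set Implicit Arguments.
Unset Strict Implicit.
Unset Printing Implicit Defensive.
Import Order.TTheory GRing.Theory Num.Theory.
Local Open Scope ring_scope.

Section Defs.
Variable R : realType.
Local Notation C := (R[i]).

(* Projective space P^3 over C, seen as nonzero vectors of C^4; all   *)
(* subsets below are cones (defined by homogeneous polynomials), so   *)
(* they are exactly subsets of P^3.                                    *)
Definition pt := 'I_4 -> C.
Definition nonzero_pt (l : pt) : Prop := exists i, l i != 0.

Definition proj_closed (Z : pt -> Prop) : Prop :=
  exists S : {mpoly C[4]} -> Prop,
    (forall p, S p -> exists d, p \is d.-homog) /\
    (forall l, Z l <-> (nonzero_pt l /\ forall p, S p -> p.@[l] = 0)).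

Definition psubset (Y Z : pt -> Prop) : Prop := forall l, Y l -> Z l.
Definition pstrict (Y Z : pt -> Prop) : Prop :=
  psubset Y Z /\ exists l, Z l /\ ~ Y l.

Definition proj_irreducible (Y : pt -> Prop) : Prop :=
  [/\ proj_closed Y, (exists l, Y l) &
      forall A B, proj_closed A -> proj_closed B ->
        (forall l, Y l -> A l \/ B l) -> psubset Y A \/ psubset Y B].

(* Z has (Krull) dimension >= 2: a chain Y0 < Y1 < Y2 of irreducible closed
   subsets contained in Z *)
Definition proj_dim_ge2 (Z : pt -> Prop) : Prop :=
  exists Y0 Y1 Y2, [/\ proj_irreducible Y0, proj_irreducible Y1,
    proj_irreducible Y2 & [/\ pstrict Y0 Y1, pstrict Y1 Y2 & psubset Y2 Z]].

(* codimension in P^3 (of dimension 3) at least 2, i.e. dim Z <= 1 *)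
Definition proj_codim_ge2 (Z : pt -> Prop) : Prop := ~ proj_dim_ge2 Z.

(* Representations of Q with dimension vector (a, b, c), in           *)
(* coordinates: V_{-1} = C^a, V_0 = C^b, V_1 = C^c (row vectors);     *)
(* f_i : V_{-1} -> V_0 is  v |-> v *m f i,  g_i : V_0 -> V_1 is       *)
(* w |-> w *m g i, so  g_i o f_j  is the matrix  f j *m g i.           *)
Definition is_Qrep (a b c : nat) (f : 'I_4 -> 'M[C]_(a, b))
  (g : 'I_4 -> 'M[C]_(b, c)) : Prop :=
  forall i j : 'I_4, f j *m g i + f i *m g j = 0.

Definition lincomb (m k : nat) (l : pt) (h : 'I_4 -> 'M[C]_(m, k)) :
  'M[C]_(m, k) := \sum_(i < 4) l i *: h i.

Definition locally_injective (a b : nat) (f : 'I_4 -> 'M[C]_(a, b)) : Prop :=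
  exists Z, [/\ proj_closed Z, proj_codim_ge2 Z &
    forall l, nonzero_pt l -> ~ Z l ->
      injective (fun v : 'rV[C]_a => v *m lincomb l f)].

Definition globally_surjective (b c : nat) (g : 'I_4 -> 'M[C]_(b, c)) : Prop :=
  forall l, nonzero_pt l ->
    forall w : 'rV[C]_c, exists v : 'rV[C]_b, v *m lincomb l g = w.

Definition instanton_rep (n : nat) (f : 'I_4 -> 'M[C]_(n, (2 * n + 2)%N))
  (g : 'I_4 -> 'M[C]_((2 * n + 2)%N, n)) : Prop :=
  [/\ is_Qrep f g, locally_injective f & globally_surjective g].

(* subrepresentations: subspaces (row spaces of square matrices)
   S1 <= C^a, S0 <= C^b, S2 <= C^c stable under the maps *)
Definition is_subrep (a b c : nat) (f : 'I_4 -> 'M[C]_(a, b))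
  (g : 'I_4 -> 'M[C]_(b, c)) (S1 : 'M[C]_a) (S0 : 'M[C]_b) (S2 : 'M[C]_c) :
  Prop :=
  forall i : 'I_4, (S1 *m f i <= S0)%MS /\ (S0 *m g i <= S2)%MS.

(* theta . (d_{-1}, d_0, d_1) *)
Definition theta_dot (th : R * R * R) (d1 d0 d2 : nat) : R :=
  th.1.1 * d1%:R + th.1.2 * d0%:R + th.2 * d2%:R.

Definition theta_stable (th : R * R * R) (a b c : nat)
  (f : 'I_4 -> 'M[C]_(a, b)) (g : 'I_4 -> 'M[C]_(b, c)) : Prop :=
  theta_dot th a b c = 0 /\
  forall (S1 : 'M[C]_a) (S0 : 'M[C]_b) (S2 : 'M[C]_c),
    is_subrep f g S1 S0 S2 ->
    (0 < \rank S1 \/ 0 < \rank S0 \/ 0 < \rank S2)%N ->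
    (\rank S1 < a \/ \rank S0 < b \/ \rank S2 < c)%N ->
    theta_dot th (\rank S1) (\rank S0) (\rank S2) < 0.

End Defs.

(* Take theta = (1, 2, -7): a subrepresentation of dimension (r1, r0, r2)
   destabilizes iff r1 + 2 r0 >= 7 r2.  If r2 = 1, a functional y killing S2
   gives four vectors g_i y, independent by global surjectivity, that all
   annihilate S0, so r0 <= 2.  If r2 = 2, properness makes the inequality
   strict.  The case r2 = 0 is excluded because the g_i have no common kernel
   vector z: the two columns of g form a 4 x 6 pencil that is nowhere
   degenerate and kills z, so it has no eigenvalue and restricts to a
   Kronecker block on z^perp.  For v in V_{-1}, the relations
   g_i f_j + g_j f_i = 0 make the pairing of the v f_i with this block a
   skew-symmetric Hankel matrix, hence zero, so every v f_i lies on the line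
   through z, which contradicts the injectivity of a generic lincomb of the
   f_i.  Then S0 = 0, and S1 = 0 by that same injectivity. *)

From HB Require Import structures.
From mathcomp Require Import all_boot all_order all_algebra.
From mathcomp Require Import reals complex mpoly.
From mathcomp Require Import zify.
From Stdlib Require Import Classical.

Import Order.TTheory GRing.Theory Num.Theory.
Local Open Scope ring_scope.
Set Implicit Arguments.
Unset Strict Implicit.
Unset Printing Implicit Defensive.

Section LinearAlgebra.
Variable F : fieldType.

Lemma mxrank_row_mx m n1 n2 (A : 'M[F]_(m, n1)) (B : 'M[F]_(m, n2)) :
  (\rank (row_mx A B) <= \rank A + \rank B)%N.
Proof.
rewrite -mxrank_tr tr_row_mx -addsmxE -(mxrank_tr A) -(mxrank_tr B).
exact: mxrank_adds_leqif.
Qed.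

Lemma rank_ltmx_adds m1 m2 n (A : 'M[F]_(m1, n)) (B : 'M[F]_(m2, n)) :
  ~~ (B <= A)%MS -> (\rank A < \rank (A + B)%MS)%N.
Proof.
by move=> nBA; apply: rank_ltmx; rewrite ltmxE addsmxSl addsmx_sub submx_refl.
Qed.

Lemma rank_lt_row_ker m n (A : 'M[F]_(m, n)) :
  (\rank A < m)%N -> exists2 u : 'rV_m, u != 0 & u *m A = 0.
Proof.
move=> ltAm; have /rowV0Pn[u /sub_kermxP uA u0] : kermx A != 0.
  by rewrite -mxrank_eq0 mxrank_ker subn_eq0 -ltnNge.
by exists u.
Qed.

Lemma mxrank_ker_cV n (w : 'cV[F]_n.+1) : w != 0 -> \rank (kermx w) = n.
Proof.
by move=> w0; rewrite mxrank_ker -mxrank_tr rank_rV trmx_eq0 w0 subn1.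
Qed.

Lemma sub_rV_orth n (a z : 'rV[F]_n) : z != 0 ->
  (forall y : 'rV_n, y *m z^T = 0 -> a *m y^T = 0) -> (a <= z)%MS.
Proof.
move=> /rV0Pn[k zk] orth_az; apply/sub_rVP; exists (a 0 k / z 0 k).
apply/rowP => j; rewrite mxE.
pose y : 'rV_n := z 0 k *: delta_mx 0 j - z 0 j *: delta_mx 0 k.
have yz : y *m z^T = 0.
  rewrite mulmxBl -!scalemxAl -!rowE; apply/rowP => i; rewrite ord1 !mxE.
  by rewrite mulrC subrr.
have := congr1 (fun M : 'M_1 => M 0 0) (orth_az y yz).
rewrite linearB !linearZ /= !trmx_delta mulmxDr -!scalemxAr mulmxN -!colE.
rewrite !mxE mulrN => /eqP; rewrite subr_eq0 => /eqP e.
by rewrite -[a 0 j](mulKf zk) e mulrCA mulrC [_^-1 * _]mulrC.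
Qed.

Lemma rank_le1_iter_ker n (S : 'M[F]_4) (Q : 'M[F]_(4, n)) :
  (\rank Q <= 1)%N -> exists2 phi : 'rV_4, phi != 0 &
    [/\ phi *m Q = 0, phi *m S *m Q = 0 & phi *m S *m S *m Q = 0].
Proof.
move=> rQ.
have rSQ : (\rank (S *m Q) <= 1)%N by apply: leq_trans (mxrankM_maxr _ _) rQ.
have rSSQ : (\rank (S *m S *m Q) <= 1)%N.
  by rewrite -mulmxA; apply: leq_trans (mxrankM_maxr _ _) rSQ.
have rN : (\rank (row_mx Q (row_mx (S *m Q) (S *m S *m Q))) < 4)%N.
  apply: leq_ltn_trans (mxrank_row_mx _ _) _.
  apply: leq_ltn_trans (leq_add rQ (mxrank_row_mx _ _)) _.
  by rewrite add1n !ltnS (leq_add rSQ rSSQ).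
have [phi phi0] := rank_lt_row_ker rN.
move=> /eqP; rewrite !mul_mx_row row_mx_eq0 row_mx_eq0.
case/and3P => /eqP h0 /eqP h1 /eqP h2.
by exists phi; rewrite // !mulmxA in h1 h2.
Qed.

End LinearAlgebra.

Lemma tr_mx11 (T : Type) (X : 'M[T]_1) : X^T = X.
Proof. by apply/matrixP => i j; rewrite !ord1 mxE. Qed.

Lemma mx11_eqN_eq0 (F : numDomainType) (X : 'M[F]_1) : X = - X -> X = 0.
Proof.
move=> XN; apply/matrixP => i j; rewrite !ord1 !mxE.
have : X 0 0 *+ 2 = 0 by rewrite mulr2n {1}XN mxE addNr.
by move/eqP; rewrite mulrn_eq0 => /eqP.
Qed.

(* Both skew-symmetries together make [s] a Hankel matrix,
   [s i.+1 j = s i j.+1], that is skew-symmetric, so all its antidiagonals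
   vanish. *)
Lemma skew_hankel_eq0 (T : zmodType) (s : nat -> nat -> T) :
  (forall x : T, x = - x -> x = 0) ->
  (forall i j, (i < 4)%N -> (j < 4)%N -> s i j = - s j i) ->
  (forall i j, (i < 4)%N -> (j < 4)%N -> s i j.+1 = - s j i.+1) ->
  forall i j, (i < 4)%N -> (j < 5)%N -> s i j = 0.
Proof.
move=> eqN_eq0 skew skewS.
have hankel i j : (i < 3)%N -> (j < 4)%N -> s i.+1 j = s i j.+1.
  by move=> hi hj; rewrite (skewS i j) 1?(skew i.+1 j) ?opprK //; lia.
have diag i : (i < 4)%N -> s i i = 0 by move=> hi; apply: eqN_eq0; apply: skew.
have diagS i : (i < 4)%N -> s i i.+1 = 0.
  by move=> hi; apply: eqN_eq0; apply: skewS.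
have x10 : s 1 0 = 0 by rewrite hankel ?diagS.
have x20 : s 2 0 = 0 by rewrite hankel ?diag.
have x21 : s 2 1 = 0 by rewrite hankel ?diagS.
have x30 : s 3 0 = 0 by rewrite hankel ?x21.
have x31 : s 3 1 = 0 by rewrite hankel ?diag.
have x32 : s 3 2 = 0 by rewrite hankel ?diagS.
have x02 : s 0 2 = 0 by rewrite -hankel ?diag.
have x03 : s 0 3 = 0 by rewrite -hankel ?diagS.
have x13 : s 1 3 = 0 by rewrite -hankel ?diag.
have x04 : s 0 4 = 0 by rewrite -hankel ?x13.
have x14 : s 1 4 = 0 by rewrite -hankel ?diagS.
have x24 : s 2 4 = 0 by rewrite -hankel ?diag.
move=> i j hi hj; case: i hi => [|[|[|[|i]]]] // _;
  by case: j hj => [|[|[|[|[|j]]]]] // _; rewrite ?diag ?diagS.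
Qed.

Section Pencil.
Variable F : numClosedFieldType.
Variables P1 P2 : 'M[F]_(4, 6).
Hypothesis pencil_free :
  forall a b : F, (a != 0) || (b != 0) -> row_free (a *: P1 + b *: P2).

Lemma row_free_pencil1 : row_free P1.
Proof.
by have := @pencil_free 1 0; rewrite scale1r scale0r addr0 oner_neq0; apply.
Qed.

(* If [V P2 = D V P1], an eigenvector [c] of [D] for [a] makes [c V] a left
   kernel vector of [a P1 - P2]. *)
Lemma pencil_not_invariant m (V : 'M[F]_(m, 4)) :
  V != 0 -> ~~ (V *m P2 <= V *m P1)%MS.
Proof.
move=> V0; apply/negP => sub.
pose Vb := row_base V.
have /submxP[D VbP] : (Vb *m P2 <= Vb *m P1)%MS.
  by rewrite !(eqmxMr _ (eq_row_base V)).
have rV_gt0 : (0 < \rank V)%N by rewrite lt0n mxrank_eq0.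
have [a /eigenvalueP[c cD c0]] := eigenvalue_closed D rV_gt0.
have cV0 : c *m Vb != 0 by rewrite mulmx_free_eq0 ?row_base_free.
have free_aN1 : row_free (a *: P1 + (-1) *: P2).
  by apply: pencil_free; rewrite oppr_eq0 oner_neq0 orbT.
move: cV0; rewrite -(mulmx_free_eq0 _ free_aN1) mulmxDr -!scalemxAr scaleN1r.
by rewrite -[c *m Vb *m P2]mulmxA VbP !mulmxA cD -!scalemxAl subrr eqxx.
Qed.

Variable w : 'cV[F]_6.
Hypothesis w_neq0 : w != 0.
Hypothesis P1w : P1 *m w = 0.
Hypothesis P2w : P2 *m w = 0.

(* The rows of [P1] and [P2] lie in the 5-dimensional space [kermx w], of
   which the rows of [P1] already fill 4 dimensions. *)
Lemma rank_P2_mod_P1 : (\rank (P2 *m cokermx P1) <= 1)%N.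
Proof.
pose K := kermx w.
have rK : \rank K = 5%N by apply: mxrank_ker_cV.
have P2K : (P2 <= K)%MS by rewrite sub_kermx P2w.
have P1K : (P1 <= K :&: kermx (cokermx P1))%MS.
  by rewrite sub_capmx !sub_kermx P1w mulmx_coker !eqxx.
have cap_ge4 : (4 <= \rank (K :&: kermx (cokermx P1)))%N.
  by rewrite (leq_trans _ (mxrankS P1K)) // row_leq_rank row_free_pencil1.
apply: leq_trans (mxrankS (submxMr _ P2K)) _.
rewrite -(addnK (\rank (K :&: kermx (cokermx P1))) (\rank (K *m _))).
by rewrite mxrank_mul_ker rK leq_subLR addn1.
Qed.

Lemma pencil_sub_kermx m1 m2 (U : 'M[F]_(m1, 4)) (V : 'M[F]_(m2, 4)) :
  (U *m P1 + V *m P2 <= kermx w)%MS.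
Proof. by rewrite addsmx_sub !sub_kermx -!mulmxA P1w P2w !mulmx0 !eqxx. Qed.

Definition pencil_shift := P2 *m pinvmx P1.

Lemma pencil_shiftP (phi : 'rV[F]_4) :
  (phi *m P2 <= P1)%MS -> phi *m P2 = phi *m pencil_shift *m P1.
Proof. by move=> sub; rewrite mulmxA mulmxKpV. Qed.

Lemma pencil_chain_start : exists2 phi : 'rV[F]_4, phi != 0 &
  [/\ (phi *m P2 <= P1)%MS, (phi *m pencil_shift *m P2 <= P1)%MS &
      (phi *m pencil_shift *m pencil_shift *m P2 <= P1)%MS].
Proof.
have [phi phi0 [h0 h1 h2]] := rank_le1_iter_ker pencil_shift rank_P2_mod_P1.
by exists phi; rewrite // !submxE -!(mulmxA _ P2) h0 h1 h2.
Qed.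

Lemma pencil_chain_rank (f1 f2 f3 f4 : 'rV[F]_4) : f1 != 0 ->
  f1 *m P2 = f2 *m P1 -> f2 *m P2 = f3 *m P1 -> f3 *m P2 = f4 *m P1 ->
  let V := (f1 + f2 + f3 + f4)%MS in
  \rank V = 4%N /\ \rank (V *m P1 + f4 *m P2)%MS = 5%N.
Proof.
move=> f1_neq0 r1 r2 r3.
set V2 := (f1 + f2)%MS; set V3 := (V2 + f3)%MS; set V4 := (V3 + f4)%MS.
have not_inv m (V : 'M_(m, 4)) : (f1 <= V)%MS -> ~~ (V *m P2 <= V *m P1)%MS.
  move=> f1V; apply: pencil_not_invariant; apply: contra_neq f1_neq0 => V0.
  by move: f1V; rewrite V0 => /submx0null.
have f1V3 : (f1 <= V3)%MS := submx_trans (addsmxSl f1 f2) (addsmxSl V2 f3).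
have f2V3 : (f2 <= V3)%MS := submx_trans (addsmxSr f1 f2) (addsmxSl V2 f3).
have f3V3 : (f3 <= V3)%MS := addsmxSr V2 f3.
have V3V4 : (V3 <= V4)%MS := addsmxSl V3 f4.
have f4V4 : (f4 <= V4)%MS := addsmxSr V3 f4.
have n2 : ~~ (f2 <= f1)%MS.
  by apply: contra (not_inv _ _ (submx_refl f1)) => f21; rewrite r1 submxMr.
have n3 : ~~ (f3 <= V2)%MS.
  apply: contra (not_inv _ _ (addsmxSl f1 f2)) => f3V2.
  by rewrite addsmxMr addsmx_sub r1 r2 !submxMr ?addsmxSr.
have n4 : ~~ (f4 <= V3)%MS.
  apply: contra (not_inv _ _ f1V3) => f4V3.
  rewrite {1}/V3 addsmxMr addsmx_sub {1}/V2 addsmxMr addsmx_sub.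
  by rewrite r1 r2 r3 !submxMr.
have n5 : ~~ (f4 *m P2 <= V4 *m P1)%MS.
  apply: contra (not_inv _ _ (submx_trans f1V3 V3V4)) => f4P2.
  rewrite {1}/V4 addsmxMr addsmx_sub {1}/V3 addsmxMr addsmx_sub f4P2 andbT.
  rewrite {1}/V2 addsmxMr addsmx_sub r1 r2 r3 !submxMr //;
    exact: submx_trans V3V4.
have rV4 : \rank V4 = 4%N.
  have lt12 := rank_ltmx_adds n2; rewrite rank_rV f1_neq0 in lt12.
  have [lt23 lt34] := (rank_ltmx_adds n3, rank_ltmx_adds n4).
  apply/eqP; rewrite eqn_leq rank_leq_col.
  exact: leq_ltn_trans (leq_ltn_trans lt12 lt23) lt34.
split=> //; have lt45 := rank_ltmx_adds n5.
rewrite mxrankMfree ?row_free_pencil1 // rV4 in lt45.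
apply/eqP; rewrite eqn_leq lt45 andbT.
by rewrite (leq_trans (mxrankS (pencil_sub_kermx _ _))) ?mxrank_ker_cV.
Qed.

(* The rows of a Kronecker block of size 4 x 5 of the pencil, which fills
   [kermx w]. *)
Lemma pencil_kronecker_chain : exists f1 f2 f3 f4 : 'rV[F]_4,
  [/\ f1 *m P2 = f2 *m P1, f2 *m P2 = f3 *m P1, f3 *m P2 = f4 *m P1,
      row_full (f1 + f2 + f3 + f4)%MS &
      (kermx w <= (f1 + f2 + f3 + f4)%MS *m P1 + f4 *m P2)%MS].
Proof.
have [f1 f1_neq0 [c1 c2 c3]] := pencil_chain_start.
set f2 := f1 *m pencil_shift; set f3 := f2 *m pencil_shift.
set f4 := f3 *m pencil_shift.
have r1 : f1 *m P2 = f2 *m P1 by apply: pencil_shiftP.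
have r2 : f2 *m P2 = f3 *m P1 by apply: pencil_shiftP.
have r3 : f3 *m P2 = f4 *m P1 by apply: pencil_shiftP.
have [rV rE] := pencil_chain_rank f1_neq0 r1 r2 r3.
exists f1, f2, f3, f4; split=> //; first by rewrite /row_full rV.
by rewrite -(mxrank_leqif_sup (pencil_sub_kermx _ _)).2 rE mxrank_ker_cV.
Qed.

Lemma skew_mx_orth_eq0 (A : 'M[F]_(4, 6)) :
  (A *m P1^T)^T = - (A *m P1^T) -> (A *m P2^T)^T = - (A *m P2^T) ->
  forall z : 'rV_6, z *m w = 0 -> A *m z^T = 0.
Proof.
move=> skew1 skew2 z zw.
have [f1 [f2 [f3 [f4 [r1 r2 r3 full span]]]]] := pencil_kronecker_chain.
pose f k := nth 0 [:: f1; f2; f3; f4] k.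
pose e k := if (k < 4)%N then f k *m P1 else f4 *m P2.
have fP2 j : (j < 4)%N -> f j *m P2 = e j.+1 by case: j => [|[|[|[|j]]]].
have skew_form (P : 'M_(4, 6)) : (A *m P^T)^T = - (A *m P^T) ->
    forall x y : 'rV_4, x *m A *m (y *m P)^T = - (y *m A *m (x *m P)^T).
  move=> skewP x y; rewrite !trmx_mul !mulmxA -!(mulmxA _ A).
  rewrite -[LHS]tr_mx11 trmx_mul trmxK [(x *m _)^T]trmx_mul skewP.
  by rewrite mulNmx mulmxN mulmxA.
have s_eq0 : forall i j, (i < 4)%N -> (j < 5)%N -> f i *m A *m (e j)^T = 0.
  apply: skew_hankel_eq0; first exact: mx11_eqN_eq0.
    by move=> i j hi hj; rewrite /e hi hj skew_form.
  by move=> i j hi hj; rewrite -!fP2 // skew_form.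
have zK : (z <= kermx w)%MS by rewrite sub_kermx zw.
have fAz i : (i < 4)%N -> f i *m (A *m z^T) = 0.
  move=> hi; have e_orth j : (j < 5)%N -> e j *m (f i *m A)^T == 0.
    by move=> hj; rewrite -[e j]trmxK -trmx_mul s_eq0 ?trmx0.
  have : (z <= kermx (f i *m A)^T)%MS.
    apply: submx_trans (submx_trans zK span) _.
    rewrite addsmx_sub addsmxMr addsmx_sub addsmxMr addsmx_sub addsmxMr.
    rewrite addsmx_sub !sub_kermx (e_orth 0%N isT) (e_orth 1%N isT).
    by rewrite (e_orth 2%N isT) (e_orth 3%N isT) (e_orth 4%N isT).
  move/sub_kermxP => zfA.
  by rewrite mulmxA -[f i *m A]trmxK -trmx_mul zfA trmx0.
have : (f1 + f2 + f3 + f4 <= kermx (A *m z^T))%MS.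
  rewrite !addsmx_sub !sub_kermx (fAz 0%N isT) (fAz 1%N isT) (fAz 2%N isT).
  by rewrite (fAz 3%N isT) eqxx.
by move/(submx_trans (submx_full 1%:M full)); rewrite sub_kermx mul1mx => /eqP.
Qed.

End Pencil.

Lemma poly_nonroot (F : numDomainType) (p : {poly F}) :
  p != 0 -> exists t, ~~ root p t.
Proof.
move=> p0; pose rs := [seq (i%:R : F) | i <- iota 0 (size p)].
have /allPn[t _ pt0] : ~~ all (root p) rs.
  apply: contra p0 => /roots_geq_poly_eq0 -> //.
    by rewrite map_inj_uniq ?iota_uniq // => a b /eqP; rewrite eqr_nat => /eqP.
  by rewrite size_map size_iota.
by exists t.
Qed.

Definition line_pt (F : nzRingType) n (y z : 'I_n -> F) (t : F) : 'I_n -> F :=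
  fun i => y i + t * (z i - y i).

Lemma line_pt0 (F : nzRingType) n (y z : 'I_n -> F) : line_pt y z 0 =1 y.
Proof. by move=> i; rewrite /line_pt mul0r addr0. Qed.

Lemma line_pt1 (F : nzRingType) n (y z : 'I_n -> F) : line_pt y z 1 =1 z.
Proof. by move=> i; rewrite /line_pt mul1r addrC subrK. Qed.

Lemma meval_line_poly (F : comNzRingType) n (p : {mpoly F[n]})
    (y z : 'I_n -> F) :
  exists P : {poly F}, forall t, P.[t] = p.@[line_pt y z t].
Proof.
pose L i : {poly F} := (y i)%:P + 'X * (z i - y i)%:P.
exists (\sum_(m <- msupp p) (p@_m)%:P * \prod_(i < n) L i ^+ m i) => t.
rewrite mevalE -horner_evalE rmorph_sum; apply: eq_bigr => m _.
rewrite rmorphM /= rmorph_prod horner_evalE hornerC; congr (_ * _).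
apply: eq_bigr => i _; rewrite rmorphXn /= horner_evalE /L.
by rewrite hornerD hornerM hornerX !hornerC.
Qed.

(* Points of the line through [y] and [z] avoid any two hypersurfaces missing
   [y] and [z] respectively, since only finitely many of them lie on each. *)
Lemma line_pt_avoid (F : numDomainType) n (y z : 'I_n -> F) (i0 : 'I_n)
    (p q : {mpoly F[n]}) :
  y i0 != 0 -> p.@[y] != 0 -> q.@[z] != 0 -> exists t,
  [/\ line_pt y z t i0 != 0, p.@[line_pt y z t] != 0 & q.@[line_pt y z t] != 0].
Proof.
move=> yi0 py qz.
have [L HL] := meval_line_poly 'X_i0 y z.
have [P HP] := meval_line_poly p y z.
have [Q HQ] := meval_line_poly q y z.
have L0 : L != 0.
  apply: contra_neq yi0 => L0.
  by rewrite -(line_pt0 y z i0) -mevalXU -HL L0 horner0.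
have P0 : P != 0.
  apply: contra_neq py => P0.
  by rewrite -(meval_eq _ (line_pt0 y z)) -HP P0 horner0.
have Q0 : Q != 0.
  apply: contra_neq qz => Q0.
  by rewrite -(meval_eq _ (line_pt1 y z)) -HQ Q0 horner0.
have [t] := poly_nonroot (mulf_neq0 (mulf_neq0 L0 P0) Q0).
rewrite /root !hornerM !mulf_eq0 !negb_or => /andP[/andP[Lt Pt] Qt].
by exists t; rewrite -HP -HQ -mevalXU -HL.
Qed.

Section ProjectiveSpace.
Variable R : realType.
Local Notation C := R[i].

Definition coord_span (k : nat) (l : pt R) : Prop :=
  nonzero_pt l /\ forall j : 'I_4, (k <= j)%N -> l j = 0.

Lemma coord_span_closed k : proj_closed (coord_span k).
Proof.
exists (fun p => exists2 j : 'I_4, (k <= j)%N & p = 'X_j); split.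
  by move=> _ [j _ ->]; exists 1%N; rewrite dhomogX; apply/mdeg1P; exists j.
move=> l; split=> [[l0 lk]|[l0 lk]]; split=> //.
  by move=> _ [j kj ->]; rewrite mevalXU lk.
by move=> j kj; rewrite -mevalXU lk //; exists j.
Qed.

Lemma closed_nonvanishing (A : pt R -> Prop) (S : {mpoly C[4]} -> Prop) y :
  (forall l, A l <-> nonzero_pt l /\ forall p, S p -> p.@[l] = 0) ->
  nonzero_pt y -> ~ A y -> exists2 p, S p & p.@[y] != 0.
Proof.
move=> defA y0 Ay; apply: NNPP => noS; apply/Ay/defA; split=> // p Sp.
by have [//|py] := eqVneq p.@[y] 0; case: noS; exists p.
Qed.

Lemma coord_span_irreducible k : (0 < k)%N -> proj_irreducible (coord_span k).
Proof.
move=> k_gt0; split; first exact: coord_span_closed.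
  exists (fun i : 'I_4 => ((i : nat) == 0%N)%:R).
  split; first by exists ord0; rewrite oner_neq0.
  by move=> j kj; rewrite (gtn_eqF (leq_trans k_gt0 kj)).
move=> A B [SA [_ defA]] [SB [_ defB]] cover.
apply: NNPP; rewrite /psubset => /not_or_and[nA nB].
have [y nAy] := not_all_ex_not _ _ nA.
have [z nBz] := not_all_ex_not _ _ nB.
have [[Yy Ay] [Yz Bz]] := (imply_to_and _ _ nAy, imply_to_and _ _ nBz).
have [p SAp py] := closed_nonvanishing defA Yy.1 Ay.
have [q SBq qz] := closed_nonvanishing defB Yz.1 Bz.
have [i0 yi0] := Yy.1.
have [t [xi0 px qx]] := line_pt_avoid yi0 py qz.
have Yx : coord_span k (line_pt y z t).
  split; first by exists i0.
  by move=> j kj; rewrite /line_pt Yy.2 // Yz.2 // subrr mulr0 addr0.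
case: (cover _ Yx) => [/defA[_ /(_ p SAp)]|/defB[_ /(_ q SBq)]] /eqP.
  by rewrite (negbTE px).
by rewrite (negbTE qx).
Qed.

Lemma coord_span_strict k1 k2 :
  (k1 < k2 <= 4)%N -> pstrict (coord_span k1) (coord_span k2).
Proof.
case/andP=> k12 k2_le4; split.
  move=> l [l0 lk]; split=> // j kj.
  by apply: lk; apply: leq_trans (ltnW k12) kj.
have k1_lt4 : (k1 < 4)%N by apply: leq_trans k12 k2_le4.
exists (fun i : 'I_4 => ((i : nat) == k1)%:R); split; last first.
  by case=> _ /(_ (Ordinal k1_lt4) (leqnn _)) /eqP; rewrite eqxx oner_eq0.
split; first by exists (Ordinal k1_lt4); rewrite eqxx oner_neq0.
by move=> j kj; rewrite (gtn_eqF (leq_trans k12 kj)).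
Qed.

(* If [Z] contained all of P^3, the coordinate flag point < line < P^3 would be
   a chain of length 2 inside it. *)
Lemma codim_ge2_avoid (Z : pt R -> Prop) :
  proj_codim_ge2 Z -> exists l, nonzero_pt l /\ ~ Z l.
Proof.
move=> Zcodim; apply: NNPP => Zfull; apply: Zcodim.
exists (coord_span 1), (coord_span 2), (coord_span 4).
split; try exact: coord_span_irreducible.
split; try exact: coord_span_strict.
by move=> l [l0 _]; apply: NNPP => Zl; apply: Zfull; exists l.
Qed.

End ProjectiveSpace.

Section Representations.
Variable R : realType.
Local Notation C := R[i].

Definition rV_pt (x : 'rV[C]_4) : pt R := fun i => x 0 i.

Lemma rV_pt_nonzero x : x != 0 -> nonzero_pt (rV_pt x).
Proof. by case/rV0Pn=> i; exists i. Qed.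

Lemma lincomb_mulmx (l : pt R) m n p (h : 'I_4 -> 'M[C]_(m, n))
    (y : 'M_(n, p)) :
  lincomb l h *m y = lincomb l (fun i => h i *m y).
Proof.
by rewrite /lincomb mulmx_suml; apply: eq_bigr => i _; rewrite scalemxAl.
Qed.

Lemma globally_surjective_ker0 b c (g : 'I_4 -> 'M[C]_(b, c)) l (y : 'cV_c) :
  globally_surjective g -> nonzero_pt l -> lincomb l g *m y = 0 -> y = 0.
Proof.
move=> gs l0 gy; apply/colP => j; rewrite mxE.
have [v vg] := gs l l0 (delta_mx 0 j).
have : (delta_mx 0 j : 'rV_c) *m y = 0 by rewrite -vg -mulmxA gy mulmx0.
by rewrite -rowE => /rowP/(_ 0); rewrite !mxE.
Qed.

Definition apply_col b c (g : 'I_4 -> 'M[C]_(b, c)) (y : 'cV_c) :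
  'M[C]_(4, b) :=
  \matrix_(i, r) (g i *m y) r 0.

Definition apply_row a b (v : 'rV_a) (f : 'I_4 -> 'M[C]_(a, b)) :
  'M[C]_(4, b) :=
  \matrix_(i, r) (v *m f i) 0 r.

Lemma mul_apply_col b c (g : 'I_4 -> 'M[C]_(b, c)) y x :
  x *m apply_col g y = (lincomb (rV_pt x) g *m y)^T.
Proof.
apply/rowP => r; rewrite lincomb_mulmx /lincomb !mxE summxE.
by apply: eq_bigr => i _; rewrite !mxE.
Qed.

Lemma apply_col_free b c (g : 'I_4 -> 'M[C]_(b, c)) y :
  globally_surjective g -> y != 0 -> row_free (apply_col g y).
Proof.
move=> gs y0; apply: inj_row_free => x; rewrite mul_apply_col => /eqP.
rewrite trmx_eq0 => /eqP gy; apply/eqP; apply: contraT => x0.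
by move: y0; rewrite (globally_surjective_ker0 gs (rV_pt_nonzero x0) gy) eqxx.
Qed.

Lemma apply_col_comb b c (g : 'I_4 -> 'M[C]_(b, c)) (a1 a2 : C) y1 y2 :
  a1 *: apply_col g y1 + a2 *: apply_col g y2 =
  apply_col g (a1 *: y1 + a2 *: y2).
Proof.
apply/matrixP => i r; rewrite !mxE !mulr_sumr -big_split; apply: eq_bigr => j _.
by rewrite !mxE mulrDr !(mulrCA (g i r j)).
Qed.

Lemma apply_col_orth m b c (g : 'I_4 -> 'M[C]_(b, c)) y (Z : 'M_(m, b)) :
  (forall i, Z *m g i *m y = 0) -> apply_col g y *m Z^T = 0.
Proof.
move=> Zgy; apply/matrixP => i k; rewrite [RHS]mxE.
have <- : (Z *m (g i *m y)) k 0 = 0 by rewrite mulmxA Zgy mxE.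
by rewrite !mxE; apply: eq_bigr => r _; rewrite !mxE mulrC.
Qed.

Lemma row_apply_row a b (v : 'rV_a) (f : 'I_4 -> 'M[C]_(a, b)) i :
  row i (apply_row v f) = v *m f i.
Proof. by apply/rowP => r; rewrite !mxE. Qed.

Lemma apply_row_col_skew a b c (f : 'I_4 -> 'M[C]_(a, b))
    (g : 'I_4 -> 'M[C]_(b, c)) v y :
  is_Qrep f g ->
  (apply_row v f *m (apply_col g y)^T)^T =
  - (apply_row v f *m (apply_col g y)^T).
Proof.
move=> Q; have entry i j : (apply_row v f *m (apply_col g y)^T) i j =
    (v *m (f i *m g j) *m y) 0 0.
  rewrite (mulmxA v) -mulmxA [RHS]mxE mxE.
  by apply: eq_bigr => r _; rewrite !mxE.
apply/matrixP => i j; rewrite [LHS]mxE [RHS]mxE !entry.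
have -> : f j *m g i = - (f i *m g j) by apply/eqP; rewrite -addr_eq0 Q.
by rewrite mulmxN mulNmx mxE.
Qed.

Lemma subrep_rank0_bound b c (g : 'I_4 -> 'M[C]_(b, c))
    (S0 : 'M_b) (S2 : 'M_c) :
  globally_surjective g -> (forall i, (S0 *m g i <= S2)%MS) ->
  (\rank S2 < c)%N -> (\rank S0 + 4 <= b)%N.
Proof.
move=> gs S0g rS2.
have [u u0 uS2] : exists2 u : 'rV_c, u != 0 & u *m S2^T = 0.
  by apply: rank_lt_row_ker; rewrite mxrank_tr.
have S0gu : S0 *m (apply_col g u^T)^T = 0.
  rewrite -[S0]trmxK -trmx_mul apply_col_orth ?trmx0 // => i.
  have /submxP[D ->] := S0g i.
  by rewrite -mulmxA -[S2]trmxK -trmx_mul uS2 trmx0 mulmx0.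
have := mulmx0_rank_max S0gu.
by rewrite mxrank_tr (eqP (apply_col_free gs _)) ?trmx_eq0.
Qed.

Section ChargeTwo.
Variables (f : 'I_4 -> 'M[C]_(2, 6)) (g : 'I_4 -> 'M[C]_(6, 2)) (l : pt R).
Hypothesis Qfg : is_Qrep f g.
Hypothesis gs : globally_surjective g.
Hypothesis f_inj : injective (fun v : 'rV_2 => v *m lincomb l f).

Lemma common_ker_eq0 (z : 'rV_6) : (forall i, z *m g i = 0) -> z = 0.
Proof.
move=> zg; apply/eqP; apply: contraT => z0.
pose P (k : 'I_2) := apply_col g (delta_mx k 0).
have P_free a b : (a != 0) || (b != 0) -> row_free (a *: P 0 + b *: P 1).
  move=> ab; rewrite apply_col_comb apply_col_free //.
  apply: contraTneq ab => /colP ab0; move: (ab0 0) (ab0 1); rewrite !mxE /=.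
  by rewrite !mulr1 !mulr0 addr0 add0r => -> ->; rewrite eqxx.
have Pz k : P k *m z^T = 0 by apply: apply_col_orth => i; rewrite zg mul0mx.
have rows (v : 'rV_2) i : (v *m f i <= z)%MS.
  apply: (sub_rV_orth (F := C) z0) => y yz; rewrite -row_apply_row -row_mul.
  rewrite (skew_mx_orth_eq0 P_free _ (Pz 0) (Pz 1) _ _ yz) ?row0 ?trmx_eq0 //;
    exact: apply_row_col_skew.
have : (lincomb l f <= z)%MS.
  apply/row_subP => j; rewrite rowE /lincomb mulmx_sumr summx_sub // => i _.
  by rewrite -scalemxAr scalemx_sub.
move/mxrankS; rewrite rank_rV z0.
have : row_free (lincomb l f).
  by apply: inj_row_free => v vf; apply: f_inj; rewrite /= vf mul0mx.
by rewrite /row_free => /eqP ->.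
Qed.

Lemma subrep_V1_eq0 (S1 : 'M_2) (S0 : 'M_6) (S2 : 'M_2) :
  is_subrep f g S1 S0 S2 -> S2 = 0 -> S1 = 0 /\ S0 = 0.
Proof.
move=> sub S20.
have S00 : S0 = 0.
  apply/row_matrixP => j; rewrite row0; apply: common_ker_eq0 => i.
  have := (sub i).2; rewrite S20 => /submx0null.
  by rewrite -row_mul => ->; rewrite row0.
split=> //; apply/row_matrixP => j; rewrite row0; apply: f_inj => /=.
rewrite mul0mx -row_mul /lincomb mulmx_sumr big1 ?row0 // => i _.
have := (sub i).1; rewrite S00 => /submx0null.
by rewrite -scalemxAr => ->; rewrite scaler0.
Qed.

End ChargeTwo.

End Representations.

Lemma theta_dot_12m7 (R : realType) (a b c : nat) :
  theta_dot ((1, 2), -7) a b c = (a + 2 * b)%:R - (7 * c)%:R :> R.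
Proof. by rewrite /theta_dot /= natrD !natrM mul1r mulNr. Qed.

Theorem mainTheorem6 (R : realType) :
  exists th : R * R * R,
    theta_dot th 2 6 2 = 0 /\
    forall (f : 'I_4 -> 'M[R[i]]_(2, (2 * 2 + 2)%N))
           (g : 'I_4 -> 'M[R[i]]_((2 * 2 + 2)%N, 2)),
      instanton_rep f g -> theta_stable th f g.
Proof.
exists ((1, 2), -7).
have dot0 : theta_dot ((1, 2), -7) 2 6 2 = 0 :> R.
  by rewrite theta_dot_12m7 subrr.
split=> // f g [Qfg [Z [_ Zcodim f_inj]] gs]; split=> // S1 S0 S2 sub nz proper.
have [l [l0 Zl]] := codim_ge2_avoid Zcodim.
have S2_gt0 : (0 < \rank S2)%N.
  rewrite lt0n mxrank_eq0; apply/negP => /eqP S20.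
  have [S10 S00] := subrep_V1_eq0 Qfg gs (f_inj l l0 Zl) sub S20.
  by move: nz; rewrite S10 S00 S20 !mxrank0; case=> [|[]].
have S0_bound := subrep_rank0_bound gs (fun i => (sub i).2).
rewrite theta_dot_12m7 subr_lt0 ltr_nat.
have := rank_leq_row S1; have := rank_leq_row S0; have := rank_leq_row S2.
move: S2_gt0 S0_bound proper; lia.
Qed.
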